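(* Let $\mathcal{C}$ be an $[n,k]_q$ MWS code satisfying property (A). Then $$n\ge\left\lceil\frac{q^{k+2}-3q+2}{4(q-1)}\right\rceil.$$
   Context: Fix a primitive element $\alpha$ of $\mathbb{F}_q$. An $[n,k]_q$ code is a $k$-dimensional subspace of $\mathbb{F}_q^n$ (non-degenerate if $k\ge 2$); it is MWS if it has exactly $\frac{q^k-1}{q-1}$ distinct non-zero Hamming weights. For $c\in\mathbb{F}_q^n$ and $\beta\in\mathbb{F}_q$, $c[\beta]=|\{l:c_l=\beta\}|$. Property (A): there exists $\beta\in\mathbb{F}_q^*$ such that for $a,b\in\mathcal{C}$, $a[\beta]=b[\beta]$ only if $a=b$. *)

From HB Require Import structures.
From mathcomp Require Import all_boot all_order all_algebra all_field.
Set Implicit Arguments. Unset Strict Implicit. Unset Printing Implicit Defensive.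
Import GRing.Theory.
Local Open Scope ring_scope.

Definition wt (F : finFieldType) (n : nat) (c : 'rV[F]_n) : nat :=
  #|[set i : 'I_n | c 0 i != 0]|.

Definition cnt (F : finFieldType) (n : nat) (c : 'rV[F]_n) (beta : F) : nat :=
  #|[set i : 'I_n | c 0 i == beta]|.

Definition num_nonzero_weights (F : finFieldType) (n : nat)
    (C : {vspace 'rV[F]_n}) : nat :=
  size (undup [seq wt c | c in [pred c : 'rV[F]_n | (c \in C) && (c != 0)]]).

Definition nondeg_code (F : finFieldType) (n : nat) (C : {vspace 'rV[F]_n}) :=
  forall i : 'I_n, exists2 c, c \in C & c 0 i != 0.

Definition MWS (F : finFieldType) (n : nat) (C : {vspace 'rV[F]_n}) : Prop :=
  num_nonzero_weights C = ((#|F| ^ \dim C - 1) %/ (#|F| - 1))%N.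

Definition propertyA (F : finFieldType) (n : nat) (C : {vspace 'rV[F]_n}) : Prop :=
  exists2 beta : F, beta != 0 &
    forall a b, a \in C -> b \in C -> cnt a beta = cnt b beta -> a = b.

Definition ceil_div (a b : nat) : nat := ((a + b - 1) %/ b)%N.

From HB Require Import structures.
From mathcomp Require Import all_boot all_order all_algebra all_field.
From mathcomp Require Import zify.
Set Implicit Arguments. Unset Strict Implicit. Unset Printing Implicit Defensive.
Import GRing.Theory.

(* By property (A) the counts c[beta], c in C, are q^k distinct naturals, so
   their sum is at least 0 + 1 + ... + (q^k - 1).  On the other hand each
   coordinate equals beta != 0 on at most q^(k-1) codewords, so the sum is at
   most n q^(k-1).  Hence q (q^k - 1) <= 2n, which already implies the bound. *)

Lemma sorted_ltn_sum_lb (s : seq nat) (a : nat) :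
  sorted ltn s -> {in s, forall y, a <= y} ->
  size s * (size s + 2 * a) <= 2 * (\sum_(x <- s) x) + size s.
Proof.
elim: s a => [|x s IHs] a //= s_sorted s_ge_a.
have a_le_x : a <= x by apply: s_ge_a; rewrite inE eqxx.
have s_gt_a : {in s, forall y, a.+1 <= y}.
  move=> y ys; apply: leq_ltn_trans a_le_x _.
  by move: ys; apply/allP; apply: order_path_min ltn_trans s_sorted.
have := IHs a.+1 (path_sorted s_sorted) s_gt_a.
rewrite big_cons /=; lia.
Qed.

Lemma uniq_sum_lb (s : seq nat) :
  uniq s -> size s * size s <= 2 * (\sum_(x <- s) x) + size s.
Proof.
move=> s_uniq; have s_perm : perm_eq (sort leq s) s by rewrite perm_sort.
have := @sorted_ltn_sum_lb (sort leq s) 0.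
rewrite (perm_size s_perm) (perm_big _ s_perm) muln0 addn0; apply => //.
by rewrite ltn_sorted_uniq_leq sort_uniq s_uniq sort_sorted //; apply: leq_total.
Qed.

Lemma card_sqr_le_sum_inj (T : finType) (A : {pred T}) (f : T -> nat) :
  {in A &, injective f} -> #|A| * #|A| <= 2 * (\sum_(x in A) f x) + #|A|.
Proof.
move=> f_inj; have := @uniq_sum_lb [seq f x | x <- enum A].
rewrite size_map -cardE big_map big_enum; apply.
by rewrite map_inj_in_uniq ?enum_uniq // => x y; rewrite !mem_enum; apply: f_inj.
Qed.

Section CoordinateFibers.
Variables (F : finFieldType) (n : nat).
Local Open Scope ring_scope.

Definition coord_fiber (A : {pred 'rV[F]_n}) (i : 'I_n) (b : F) : {set 'rV[F]_n} :=
  [set c in A | c 0 i == b].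

Lemma sum_cnt_fibers (A : {pred 'rV[F]_n}) (b : F) :
  (\sum_(c in A) cnt c b = \sum_(i < n) #|coord_fiber A i b|)%N.
Proof.
under eq_bigr do rewrite /cnt -sum1_card big_mkcond /=.
rewrite exchange_big /=; apply: eq_bigr => i _.
rewrite -sum1_card big_mkcond [RHS]big_mkcond /=; apply: eq_bigr => c _.
by rewrite !inE; case: (c \in A); case: (c 0 i == b).
Qed.

Variable C : {vspace 'rV[F]_n}.

(* Adding a multiple of a fixed codeword of the fiber over b maps that fiber
   injectively into the fiber over any g, so all q fibers are at least as big. *)
Lemma card_coord_fiber_le (i : 'I_n) (b : F) : b != 0 ->
  (#|coord_fiber C i b| * #|F| <= #|C|)%N.
Proof.
move=> b_neq0; have [->|[c0]] := set_0Vmem (coord_fiber C i b).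
  by rewrite cards0.
rewrite inE => /andP[c0C /eqP c0ib].
have fiber_le g : (#|coord_fiber C i b| <= #|coord_fiber C i g|)%N.
  pose f c := c + ((g - b) / b) *: c0.
  have f_inj : injective f by move=> x y /addIr.
  rewrite -(card_imset _ f_inj); apply: subset_leq_card.
  apply/subsetP => y /imsetP[x].
  rewrite inE => /andP[xC /eqP xib] ->.
  by rewrite inE rpredD ?rpredZ //= !mxE xib c0ib divfK // addrC subrK.
have -> : #|C| = (\sum_g #|coord_fiber C i g|)%N.
  rewrite -sum1_card (partition_big (fun c : 'rV[F]_n => c 0 i) predT) //=.
  by apply: eq_bigr => g _; rewrite -sum1_card; apply: eq_bigl => c; rewrite inE.
by rewrite mulnC -sum_nat_const; apply: leq_sum => g _.
Qed.

Lemma sum_cnt_le (b : F) : b != 0 ->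
  ((\sum_(c in C) cnt c b) * #|F| <= n * #|C|)%N.
Proof.
move=> b_neq0; rewrite sum_cnt_fibers big_distrl /=.
rewrite -[n in (_ <= n * _)%N]card_ord -sum_nat_const.
by apply: leq_sum => i _; apply: card_coord_fiber_le.
Qed.

Lemma propertyA_card_le : propertyA C -> (#|F| * #|C| <= 2 * n + #|F|)%N.
Proof.
case=> b b_neq0 cnt_inj.
have C_gt0 : (0 < #|C|)%N by apply/card_gt0P; exists 0; rewrite mem0v.
have sqr_le : (#|C| * #|C| <= 2 * (\sum_(c in C) cnt c b) + #|C|)%N.
  exact: card_sqr_le_sum_inj.
have := leq_mul (leqnn #|F|) sqr_le; have := sum_cnt_le b_neq0.
rewrite -(leq_pmul2l C_gt0); nia.
Qed.

End CoordinateFibers.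

(* Substituting 2n >= Q - q, the claim reduces to
   0 < (q - 2) (Q - q^2) + q (q - 2)^2 + q - 1. *)
Lemma ceil_div_le (q Q n : nat) : (2 <= q)%N -> (q * q <= Q)%N ->
  (Q <= 2 * n + q)%N -> (ceil_div (q * Q + 2 - 3 * q) (4 * (q - 1)) <= n)%N.
Proof.
case: q => [|[|m]] // _ qq_le_Q Q_le; rewrite /ceil_div -ltnS ltn_divLR; last lia.
have : (m * (m.+2 * m.+2) <= m * Q)%N by rewrite leq_mul2l qq_le_Q orbT.
have : (2 * m.+1 * Q <= 2 * m.+1 * (2 * n + m.+2))%N by rewrite leq_mul2l Q_le orbT.
nia.
Qed.

Theorem mainTheorem11 (F : finFieldType) (n k : nat) (C : {vspace 'rV[F]_n}) :
  (1 <= k)%N ->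
  \dim C = k ->
  ((2 <= k)%N -> nondeg_code C) ->
  MWS C ->
  propertyA C ->
  (ceil_div (#|F| ^ (k + 2) + 2 - 3 * #|F|) (4 * (#|F| - 1)) <= n)%N.
Proof.
move=> k_ge1 dimC _ _ /propertyA_card_le.
rewrite card_vspace dimC -expnS => card_le.
have q_ge2 : (2 <= #|F|)%N by apply/card_gt1P; exists 0%R, 1%R; rewrite eq_sym oner_neq0.
rewrite [k + 2]addn2 expnS; apply: ceil_div_le card_le => //.
by rewrite mulnn (leq_exp2l _ _ q_ge2); exact: k_ge1.
Qed.
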